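(* Let $\tilde w:\mathcal D^n(\delta)\to\mathcal D^n(\delta)$ and let $C\subset\mathcal D^n(\delta)$ be nonempty with $\tilde w(C)\subset C$. Let $\{\Lambda_\alpha\}_{\alpha\in\mathcal I}$ be the (possibly uncountable) family of all absorbing sets for $\tilde w$ in $C$. Then $\mathcal M:=\bigcap_{\alpha\in\mathcal I}\Lambda_\alpha$ is the set of all periodic points of $\tilde w$ in $C$, and hence $\mathcal M=\tilde w(\mathcal M)$.
   Context: $\mathcal D^n(\delta)=\{\delta m:m\in\mathbb Z^n\}\subset\mathbb R^n$ for fixed $\delta>0$. For a map $\tilde w$ and nonempty $C$ with $\tilde w(C)\subset C$, a set $\Lambda\subset C$ is an absorbing set for $\tilde w$ in $C$ if for every $\tilde x\in C$ there is $N\in\mathbb N$ with $\tilde w^{\circ i}(\tilde x)\in\Lambda$ for all $i\ge N$. A point $\tilde x$ is periodic if $\tilde w^{\circ k}(\tilde x)=\tilde x$ for some integer $k\ge1$. *)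

From HB Require Import structures.
From mathcomp Require Import all_boot all_order all_algebra.
From mathcomp Require Import all_classical all_reals.
Set Implicit Arguments. Unset Strict Implicit. Unset Printing Implicit Defensive.
Import Order.TTheory GRing.Theory Num.Theory.
Local Open Scope ring_scope.
Local Open Scope classical_set_scope.

Definition lattice (R : realType) (n : nat) (delta : R) : set 'rV[R]_n :=
  [set x | exists m : 'rV[int]_n, x = delta *: map_mx (fun z : int => z%:~R) m].

Definition absorbing (T : Type) (w : T -> T) (C Lambda : set T) : Prop :=
  Lambda `<=` C /\
  forall x, C x -> exists N : nat, forall i : nat, (N <= i)%N -> Lambda (iter i w x).

Definition periodic (T : Type) (w : T -> T) (x : T) : Prop :=
  exists k : nat, (1 <= k)%N /\ iter k w x = x.

From HB Require Import structures.
From mathcomp Require Import all_boot all_order all_algebra.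
From mathcomp Require Import all_classical all_reals.
Local Open Scope ring_scope.
Local Open Scope classical_set_scope.

(* A periodic point of C is revisited at arbitrarily late times (the multiples
   of its period), so it lies in every absorbing set.  If x is not periodic,
   an orbit passes through x at most once, since two visits would make x
   periodic; hence C minus {x} is again absorbing, and x is not in the
   intersection.  The periodic points form a w-invariant set because w maps
   each periodic cycle onto itself. *)

Section PeriodicPoints.
Set Implicit Arguments. Unset Strict Implicit.
Variables (T : Type) (w : T -> T).

Lemma iter_period_mul x k m : iter k w x = x -> iter (m * k)%N w x = x.
Proof. by move=> xk; rewrite iterM; apply: iter_fix. Qed.

Lemma iter_predn_period x k : (0 < k)%N -> iter k w x = x -> w (iter k.-1 w x) = x.
Proof. by move=> k_gt0 xk; rewrite -iterS prednK. Qed.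

Lemma periodic_iter x i : periodic w x -> periodic w (iter i w x).
Proof.
move=> [k [k_gt0 xk]]; exists k; split => //.
by rewrite -iterD addnC iterD xk.
Qed.

Lemma revisit_periodic x y i j :
  (i < j)%N -> iter i w y = x -> iter j w y = x -> periodic w x.
Proof.
move=> lt_ij yi yj; exists (j - i)%N; split; first by rewrite subn_gt0.
by rewrite -[in iter _ w x]yi -iterD subnK // ltnW.
Qed.

Lemma nonperiodic_visit_uniq x y i j :
  ~ periodic w x -> iter i w y = x -> iter j w y = x -> i = j.
Proof.
move=> npx yi yj; case: (ltngtP i j) => // [lt_ij | lt_ji]; exfalso; apply: npx.
  exact: revisit_periodic lt_ij yi yj.
exact: revisit_periodic lt_ji yj yi.
Qed.

Variable C : set T.
Hypothesis wC : {homo w : x / C x}.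

Lemma iter_closed x i : C x -> C (iter i w x).
Proof. by move=> Cx; elim: i => //= i; apply: wC. Qed.

Lemma absorbing_self : absorbing w C C.
Proof. by split => // x Cx; exists 0%N => i _; apply: iter_closed. Qed.

Lemma absorbing_periodic L x : absorbing w C L -> C x -> periodic w x -> L x.
Proof.
move=> [_ absL] Cx [k [k_gt0 xk]]; have [N LN] := absL x Cx.
by rewrite -(iter_period_mul N xk); apply: LN; rewrite leq_pmulr.
Qed.

Lemma absorbing_setD1 x : ~ periodic w x -> absorbing w C (C `\ x).
Proof.
move=> npx; split => [y [] //|y Cy].
have [[i yi]|no_visit] := pselect (exists i, iter i w y = x).
  exists i.+1 => j lt_ij; split; first exact: iter_closed.
  by move=> /= yj; move: lt_ij; rewrite (nonperiodic_visit_uniq npx yi yj) ltnn.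
exists 0%N => j _; split; first exact: iter_closed.
by move=> yj; apply: no_visit; exists j.
Qed.

Lemma bigcap_absorbing :
  \bigcap_(L in [set L | absorbing w C L]) L = [set x | C x /\ periodic w x].
Proof.
apply/seteqP; split => [x Mx | x [Cx px] L absL]; last exact: absorbing_periodic.
have Cx : C x by apply: Mx absorbing_self.
split => //; apply: contrapT => npx.
by have [_] := Mx _ (absorbing_setD1 npx); apply.
Qed.

Lemma image_periodic_points :
  w @` [set x | C x /\ periodic w x] = [set x | C x /\ periodic w x].
Proof.
apply/seteqP; split => [_ [y [Cy py] <-] | x [Cx px]].
  by split; [apply: wC | apply: (periodic_iter 1)].
have [k [k_gt0 xk]] := px.
exists (iter k.-1 w x); last exact: iter_predn_period.
by split; [apply: iter_closed | apply: periodic_iter].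
Qed.

End PeriodicPoints.

Theorem theorem2 (R : realType) (n : nat) (delta : R) (hdelta : 0 < delta)
    (w : 'rV[R]_n -> 'rV[R]_n) (C : set 'rV[R]_n)
    (hw : forall x, @lattice R n delta x -> @lattice R n delta (w x))
    (hCD : C `<=` @lattice R n delta) (hC0 : C !=set0) (hwC : w @` C `<=` C) :
  let M := \bigcap_(L in [set L : set 'rV[R]_n | absorbing w C L]) L in
  M = [set x | C x /\ periodic w x] /\ M = w @` M.
Proof.
have wC : {homo w : x / C x} by apply/image_subP.
by rewrite /= bigcap_absorbing // image_periodic_points.
Qed.
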